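(* For every finite simple graph $G$, the acyclic chromatic number satisfies $a(G)\le \tau(G)$.
   Context: $\tau(G)$ denotes the number of vertices in a longest path of $G$. An acyclic colouring of $G$ is a proper vertex colouring of $G$ in which no cycle of $G$ is coloured with only two colours; $a(G)$ is the minimum number of colours in an acyclic colouring of $G$. *)

(* A finite simple graph is a symmetric irreflexive
   relation e : rel T on a finite type T of vertices. *)
From mathcomp Require Import all_boot.
Set Implicit Arguments. Unset Strict Implicit. Unset Printing Implicit Defensive.

Section Graph.
Variables (T : finType) (e : rel T).

Definition is_gpath (s : seq T) : bool :=
  uniq s && (if s is x :: s' then path e x s' else true).

Definition is_gcycle (s : seq T) : bool :=
  [&& uniq s, 3 <= size s & cycle e s].

(* tau(G): number of vertices of a longest path
   (paths have at most #|T| vertices since they are duplicate-free). *)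
Definition tau : nat :=
  \max_(n < #|T|.+1 | [exists s : n.-tuple T, is_gpath s]) n.

Definition proper_col k (c : T -> 'I_k) : bool :=
  [forall x, forall y, e x y ==> (c x != c y)].

(* acyclic colouring: proper, and no cycle uses at most two colours
   (cycles have at most #|T| vertices since they are duplicate-free). *)
Definition acyclic_col k (c : T -> 'I_k) : bool :=
  proper_col c &&
  ~~ [exists n : 'I_#|T|.+1, exists s : n.-tuple T,
        is_gcycle s && (size (undup (map c s)) <= 2)].

Definition has_acyclic_col (k : nat) : bool :=
  [exists c : {ffun T -> 'I_k}, acyclic_col c].

Hypothesis irr : irreflexive e.

Lemma has_acyclic_col_exists : exists k, has_acyclic_col k.
Proof.
exists #|T|; apply/existsP; exists [ffun x => enum_rank x].
apply/andP; split.
  apply/forallP => x; apply/forallP => y; apply/implyP => exy.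
  rewrite !ffunE; apply/negP => /eqP /enum_rank_inj exy'.
  by rewrite exy' irr in exy.
apply/negP => /existsP [n /existsP [s /andP [/and3P [us s3 _] hs]]].
have : uniq (map [ffun x => enum_rank x] s).
  rewrite map_inj_uniq // => x y; rewrite !ffunE; exact: enum_rank_inj.
move/undup_id => hu; move: hs; rewrite hu size_map.
by move=> h; have := leq_trans s3 h.
Qed.

Definition acyclic_chrom : nat := ex_minn has_acyclic_col_exists.

End Graph.

(* Colour every vertex by its depth in a depth-first spanning forest, i.e.
   by the number of edges of its tree path from the root.  Every edge of the
   graph joins an ancestor to a descendant, so the neighbours of [v] of
   smaller colour are ancestors of [v] and have pairwise distinct colours.
   On a cycle using two colours, a vertex of maximal colour would have two
   distinct cycle-neighbours of the same smaller colour.  A vertex of colour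
   [k] ends a path with [k + 1] vertices, so the colours are below [tau G].
   The forest is built recursively: give a root [x] colour 0, give the rest
   of its component [K] 1 + the colour of a forest of [K - x] whose roots are
   neighbours of [x], and recurse on the remaining components. *)
From mathcomp Require Import all_boot.
Set Implicit Arguments. Unset Strict Implicit. Unset Printing Implicit Defensive.

Section DepthColouring.
Variables (T : finType) (e : rel T).
Hypotheses (e_sym : symmetric e) (e_irr : irreflexive e).

Definition induced (S : {set T}) : rel T := [rel a b | [&& a \in S, b \in S & e a b]].

Definition rooted (S A : {set T}) : Prop :=
  forall v, v \in S -> exists2 a, a \in A :&: S & connect (induced S) a v.

(* [B] is a union of connected components of the subgraph induced by [S]. *)
Definition edge_closed (S B : {set T}) : Prop :=
  {in B, forall y, {in S, forall z, e y z -> z \in B}}.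

Definition proper_on (S : {set T}) (c : T -> nat) : Prop :=
  {in S &, forall x y, e x y -> c x != c y}.

Definition lower_nbrs_distinct (S : {set T}) (c : T -> nat) : Prop :=
  {in S, forall v, {in S &, forall a b,
     e v a -> e v b -> c a < c v -> c b < c v -> c a = c b -> a = b}}.

Definition depth_witnessed (S A : {set T}) (c : T -> nat) : Prop :=
  forall v, v \in S -> exists x s,
    [/\ x \in A, is_gpath e (x :: s), {subset x :: s <= S}, last x s = v
      & size s = c v].

Definition depth_colouring (S A : {set T}) (c : T -> nat) : Prop :=
  [/\ proper_on S c, lower_nbrs_distinct S c & depth_witnessed S A c].

Lemma depth_colouring_set0 (A : {set T}) : depth_colouring set0 A (fun=> 0).
Proof. by split=> [x|v|v]; rewrite inE. Qed.

Lemma path_induced (S : {set T}) (y : T) (q : seq T) :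
  path e y q -> {subset y :: q <= S} -> path (induced S) y q.
Proof.
elim: q y => [|z q IHq] y //= /andP[eyz pq] sub.
rewrite IHq //; last by move=> w w_zq; apply: sub; rewrite inE w_zq orbT.
rewrite andbT; apply/and3P; split=> //; apply: sub; by rewrite !inE eqxx ?orbT.
Qed.

Lemma path_induced_sub (S : {set T}) (y : T) (q : seq T) :
  y \in S -> path (induced S) y q -> path e y q /\ {subset y :: q <= S}.
Proof.
elim: q y => [|z q IHq] y yS /=; first by split=> // w; rewrite inE => /eqP->.
case/andP=> /and3P[_ zS eyz] /(IHq z zS)[pq sub]; split; first by rewrite eyz.
by move=> w; rewrite inE => /predU1P[-> //|/sub].
Qed.

Lemma connect_induced_mem (S : {set T}) (a b : T) :
  connect (induced S) a b -> a \in S -> b \in S.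
Proof.
by move=> ab aS; rewrite -(closed_connect _ ab) // => x y /and3P[-> -> _].
Qed.

Lemma edge_closed_connect (S B : {set T}) (a v : T) :
  B \subset S -> edge_closed S B -> a \in B ->
  connect (induced S) a v -> connect (induced B) a v.
Proof.
move=> sBS clB aB /connectP[p pp ->]; apply/connectP; exists p => //.
elim: p a aB pp => [|z p IHp] a aB //= /andP[/and3P[_ zS eaz] pp].
have zB := clB a aB z zS eaz.
by rewrite IHp // andbT; apply/and3P.
Qed.

Lemma edge_closedC (S B : {set T}) : edge_closed S B -> edge_closed S (S :\: B).
Proof.
move=> clB y; rewrite inE => /andP[yB yS] z zS eyz.
rewrite inE zS andbT; apply: contra yB => zB.
by apply: (clB z zB y yS); rewrite e_sym.
Qed.

Lemma edge_closed_mem (S B : {set T}) (y z : T) :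
  edge_closed S B -> y \in S -> z \in S -> e y z -> (y \in B) = (z \in B).
Proof.
move=> clB yS zS eyz; apply/idP/idP => [yB|zB]; first exact: clB eyz.
by apply: (clB z zB y yS); rewrite e_sym.
Qed.

Section Glue.
Variables (S A K : {set T}) (x : T).
Hypotheses (sKS : K \subset S) (clK : edge_closed S K) (xK : x \in K) (xA : x \in A).
Variables (c1 c2 : T -> nat).
Hypothesis c1_col : depth_colouring (S :\: K) A c1.
Hypothesis c2_col : depth_colouring (K :\ x) [set y | e x y] c2.

Definition glue (y : T) : nat :=
  if y \in K then (if y == x then 0 else (c2 y).+1) else c1 y.

Let outside_K (y : T) : y \in S -> y \notin K -> y \in S :\: K.
Proof. by move=> yS yK; rewrite inE yK. Qed.

Let inside_K (y : T) : y \in K -> y != x -> y \in K :\ x.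
Proof. by move=> yK yx; rewrite !inE yx. Qed.

Lemma glue_proper : proper_on S glue.
Proof.
case: c1_col c2_col => [c1P _ _] [c2P _ _] u w uS wS euw.
have eK := edge_closed_mem clK uS wS euw.
rewrite /glue -eK; case: ifP => [uK|/negbT uK]; last first.
  by apply: c1P euw; apply: outside_K; rewrite // -eK.
have wK : w \in K by rewrite -eK.
case: (u =P x) => [ux|/eqP ux]; case: (w =P x) => [wx|/eqP wx] //.
  by rewrite ux wx e_irr in euw.
by rewrite eqSS; apply: c2P euw; apply: inside_K.
Qed.

Lemma glue_lower_nbrs_distinct : lower_nbrs_distinct S glue.
Proof.
case: c1_col c2_col => [_ c1L _] [_ c2L _] v vS a b aS bS eva evb.
have eKa := edge_closed_mem clK vS aS eva; have eKb := edge_closed_mem clK vS bS evb.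
rewrite /glue -eKa -eKb; case: ifP => [vK|/negbT vK]; last first.
  by apply: (c1L v _ a b _ _ eva evb); apply: outside_K; rewrite // -?eKa -?eKb.
have aK : a \in K by rewrite -eKa.
have bK : b \in K by rewrite -eKb.
case: (v =P x) => [//|/eqP vx].
case: (a =P x) => [ax|/eqP ax]; case: (b =P x) => [bx|/eqP bx] //.
  by rewrite ax bx.
by move=> lta ltb [cab]; apply: c2L evb _ _ cab; rewrite ?inside_K.
Qed.

Lemma glue_depth_witnessed : depth_witnessed S A glue.
Proof.
case: c1_col c2_col => [_ _ c1W] [_ _ c2W] v vS; rewrite /glue.
case: ifP => [vK|/negbT vK]; last first.
  have [y [s [yA ps sub lv sz]]] := c1W v (outside_K vS vK).
  by exists y, s; split=> // w /sub; rewrite inE => /andP[].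
case: (v =P x) => [->|/eqP vx].
  exists x, [::]; split=> // w; rewrite inE => /eqP->; exact: (subsetP sKS).
have [y [s [yN /andP[us ps] sub lv sz]]] := c2W v (inside_K vK vx).
have x_ys : x \notin y :: s by apply/negP => /sub; rewrite !inE eqxx.
exists x, (y :: s); split=> //=.
- rewrite /is_gpath cons_uniq x_ys us /= ps andbT; by rewrite inE in yN.
- move=> w; rewrite inE => /predU1P[->|/sub]; first exact: (subsetP sKS).
  by rewrite inE => /andP[_ /(subsetP sKS)].
- by rewrite sz.
Qed.

Lemma glue_depth_colouring : depth_colouring S A glue.
Proof.
by split; [apply: glue_proper|apply: glue_lower_nbrs_distinct|apply: glue_depth_witnessed].
Qed.

End Glue.

Section Component.
Variables (S A : {set T}) (x : T).
Hypotheses (xS : x \in S) (rootedSA : rooted S A).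

Definition component : {set T} := [set y | connect (induced S) x y].

Lemma component_sub : component \subset S.
Proof. by apply/subsetP => y; rewrite inE => /connect_induced_mem; apply. Qed.

Lemma component_mem : x \in component.
Proof. by rewrite inE connect0. Qed.

Lemma edge_closed_component : edge_closed S component.
Proof.
move=> y yK z zS eyz; have yS := subsetP component_sub y yK.
by move: yK; rewrite !inE => /connect_trans; apply; apply/connect1/and3P.
Qed.

Lemma rooted_component_compl : rooted (S :\: component) A.
Proof.
move=> v; rewrite inE => /andP[vK vS].
have [a] := rootedSA vS; rewrite inE => /andP[aA aS] av.
have aK : a \notin component.
  by apply: contra vK; rewrite !inE => xa; apply: connect_trans xa av.
have aSK : a \in S :\: component by rewrite inE aK.
exists a; first by rewrite inE aA.
apply: edge_closed_connect av => //; first exact: subsetDl.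
exact/edge_closedC/edge_closed_component.
Qed.

Lemma rooted_component_nbrs : rooted (component :\ x) [set y | e x y].
Proof.
move=> v; rewrite !inE => /andP[vx /connectP[p pp vl]].
case/shortenP: pp vl => [[|y q]] pq uxq _ vl; first by rewrite vl eqxx in vx.
have [/andP[exy pyq] _] := path_induced_sub xS pq.
have subK : {subset y :: q <= component :\ x}.
  move=> w wq; have xw : connect (induced S) x w.
    by rewrite (path_connect pq) // inE wq orbT.
  rewrite !inE xw andbT; by apply/eqP => wx; move: uxq; rewrite -wx /= wq.
exists y; first by rewrite in_setI subK ?mem_head // inE exy.
by apply/connectP; exists q; rewrite ?path_induced.
Qed.

End Component.

Lemma depth_colouring_exists (S A : {set T}) :
  rooted S A -> exists c, depth_colouring S A c.
Proof.
have [n] := ubnP #|S|; elim: n S A => // n IHn S A /ltnSE szS rootedSA.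
have [->|[v vS]] := set_0Vmem S; first by exists (fun=> 0); apply: depth_colouring_set0.
have [x] := rootedSA v vS; rewrite inE => /andP[xA xS] _.
have sKS := component_sub xS; have xK := component_mem S x.
have ltK : #|S :\: component S x| < #|S|.
  by apply/proper_card/properP; split; [apply: subsetDl|exists x; rewrite // inE xK].
have ltKx : #|component S x :\ x| < #|S|.
  apply/proper_card/properP; split; last by exists x; rewrite // !inE eqxx.
  by apply: subset_trans sKS; apply: subsetDl.
have [c1 c1_col] := IHn _ _ (leq_trans ltK szS) (rooted_component_compl xS rootedSA).
have [c2 c2_col] := IHn _ _ (leq_trans ltKx szS) (rooted_component_nbrs xS).
have clK := edge_closed_component xS.
exact: (ex_intro _ _ (glue_depth_colouring sKS clK xK xA c1_col c2_col)).
Qed.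

Lemma gpath_size_le_tau (s : seq T) : is_gpath e s -> size s <= tau e.
Proof.
move=> ps; have ub : size s < #|T|.+1.
  by rewrite ltnS -(card_uniqP (andP ps).1) max_card.
pose has_gpath (n : 'I_#|T|.+1) := [exists t : n.-tuple T, is_gpath e t].
have : has_gpath (Ordinal ub) by apply/existsP; exists (in_tuple s).
exact: (@leq_bigmax_cond _ has_gpath (fun n => nat_of_ord n)).
Qed.

Lemma cycle_two_nbrs (s : seq T) (v : T) :
  uniq s -> 2 < size s -> cycle e s -> v \in s ->
  exists a b, [/\ a \in s, b \in s, a != b, e v a & e v b].
Proof.
move=> us s3 cs vs; have [i s' def_s] := rot_to vs.
rewrite -(rot_uniq i) def_s in us; rewrite -(size_rot i) def_s in s3.
rewrite -(rot_cycle i) def_s in cs.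
case: s' us s3 cs def_s => [|a [|t0 t]] // us _ /= /andP[eva].
rewrite rcons_path => /and3P[_ _ ebv] def_s.
have mem_s : {subset [:: v, a, t0 & t] <= s} by move=> w; rewrite -def_s mem_rot.
have bt : last t0 t \in t0 :: t := mem_last t0 t.
exists a, (last t0 t); split=> //; last by rewrite e_sym.
- by apply: mem_s; rewrite !inE eqxx orbT.
- by apply: mem_s; rewrite in_cons in_cons bt !orbT.
- by apply: contraNneq (andP (andP us).2).1 => ->.
Qed.

Lemma cycle_uses_three_colours (c : T -> nat) (s : seq T) :
  proper_on [set: T] c -> lower_nbrs_distinct [set: T] c ->
  is_gcycle e s -> 2 < size (undup (map c s)).
Proof.
move=> cP cL /and3P[us s3 cs].
have [x0 x0s] : exists x0, x0 \in s.
  by case: s s3 {us cs} => // x0 s' _; exists x0; apply: mem_head.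
have [v vs vmax] := arg_maxnP c x0s.
have [a [b [a_s b_s ab eva evb]]] := cycle_two_nbrs us s3 cs vs.
have lta : c a < c v by rewrite ltn_neqAle eq_sym cP ?inE //; apply: vmax.
have ltb : c b < c v by rewrite ltn_neqAle eq_sym cP ?inE //; apply: vmax.
have cab : c a != c b.
  by apply: contra ab => /eqP cab; apply/eqP; apply: (cL v _ a b _ _ eva evb); rewrite ?inE.
apply: (@uniq_leq_size _ [:: c v; c a; c b]).
  by rewrite /= !inE negb_or cab !(eq_sym (c v)) ltn_eqF ?ltn_eqF.
by move=> z; rewrite !inE => /or3P[] /eqP->; rewrite mem_undup map_f.
Qed.

End DepthColouring.

Theorem corollary3p1 (T : finType) (e : rel T)
  (e_sym : symmetric e) (e_irr : irreflexive e) :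
  acyclic_chrom e_irr <= tau e.
Proof.
have rootedT : rooted e [set: T] [set: T] by move=> v _; exists v; rewrite ?inE.
have [c [cP cL cW]] := depth_colouring_exists e_sym e_irr rootedT.
have c_lt v : c v < tau e.
  by have [x [s [_ ps _ _ <-]]] := cW v (in_setT v); apply: gpath_size_le_tau ps.
pose cf : {ffun T -> 'I_(tau e)} := [ffun v => Ordinal (c_lt v)].
rewrite /acyclic_chrom; case: ex_minnP => m _; apply; apply/existsP; exists cf.
apply/andP; split.
  apply/forallP => u; apply/forallP => w; apply/implyP => euw.
  by rewrite !ffunE; apply: cP; rewrite ?inE.
apply/negP => /existsP[n /existsP[s /andP[s_cycle]]]; apply/negP; rewrite -ltnNge.
rewrite -(size_map val) -undup_map_inj; last exact: val_inj.
have -> : map val (map cf s) = map c s.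
  by rewrite -map_comp; apply: eq_map => v; rewrite /= ffunE.
exact: cycle_uses_three_colours s_cycle.
Qed.
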